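(* Let $\Gamma$ be a finite constraint language, $\mathbf{I}$ a CSP instance with incidence graph $G$, and $q,k\in\mathbb{N}$. If $G$ has no $(q,k+1)$-separation, then $\mathbf{I}$ is $(q,k)$-nice.
   Context: A CSP instance is a finite set of constraints $(S,R)$ ($S$ a sequence of variables, $R$ a relation over a finite domain $\mathcal{D}$); its incidence graph $G$ is the bipartite graph on variables and constraints with $x\sim C$ iff $x$ in the scope of $C$. A $(q,k)$-separation of $G$ is a partition $(A,S,B)$ of $V(G)$ with $S$ consisting of variable vertices, $N(A),N(B)\subseteq S$, $|S|\le k$, and $|A|,|B|\ge q$. For $\alpha:X\to\mathcal{D}$, $\mathbf{I}|_\alpha$ restricts each relation to tuples consistent with $\alpha$ and removes positions of variables in $X$; $X$ is a strong backdoor into $\mathrm{CSP}(\Gamma)$ if every $\mathbf{I}|_\alpha$ uses only relations from $\Gamma$. $\mathbf{Torso}_G(X)$ is the graph on $X$ with $x_1x_2$ an edge iff adjacent in $G$ or both adjacent to a common component of $G-X$; the width of $X$ is $\mathrm{tw}(\mathbf{Torso}_G(X))$. $\mathbf{I}$ is $(\beta,k)$-nice if $\mathrm{tw}(G)\le\beta+k$, or if whenever $\mathbf{I}$ has a strong backdoor into $\mathrm{CSP}(\Gamma)$ of width at most $k$, it has one, $X$, of width at most $k$ such that $G-X$ has exactly one connected component $C$ with at least $\beta+1$ vertices and $|V(G)\setminus N[C]|\le\beta$. *)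

From mathcomp Require Import all_boot.

Set Implicit Arguments.
Unset Strict Implicit.
Unset Printing Implicit Defensive.

(* Finite (simple, undirected) graphs given by a vertex set W : {set T} *)
(* of a finType T and a symmetric edge relation e : rel T; only edges  *)
(* between vertices of W matter.                                       *)
Section Graphs.
Variable T : finType.

Definition restr (e : rel T) (U : {set T}) : rel T :=
  fun x y => [&& x \in U, y \in U & e x y].

Definition is_component (e : rel T) (U K : {set T}) : Prop :=
  exists2 x, x \in U & K = [set y in U | connect (restr e U) x y].

Definition nbh (e : rel T) (W A : {set T}) : {set T} :=
  [set y in W :\: A | [exists x in A, e x y]].

Definition cnbh (e : rel T) (W A : {set T}) : {set T} := A :|: nbh e W A.

Definition tedge n (par : 'I_n.+1 -> 'I_n.+1) : rel 'I_n.+1 :=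
  fun a b => ((0 < a) && (par a == b)) || ((0 < b) && (par b == a)).

(* tw((W, e)) <= w : there is a tree decomposition of width <= w.
   The tree has nodes 'I_n.+1 and edges {i, par i} for i > 0, where
   par i < i (every finite tree admits such a numbering, e.g. BFS). *)
Definition tw_le (e : rel T) (W : {set T}) (w : nat) : Prop :=
  exists n (par : 'I_n.+1 -> 'I_n.+1) (bag : 'I_n.+1 -> {set T}),
  [/\ (forall i : 'I_n.+1, 0 < i -> par i < i),
      (forall i, bag i \subset W) /\
      (forall v, v \in W -> exists i, v \in bag i),
      (forall u v, u \in W -> v \in W -> e u v ->
        exists i, (u \in bag i) && (v \in bag i)),
      (forall v i j, v \in bag i -> v \in bag j ->
        connect (fun a b => [&& tedge par a b, v \in bag a & v \in bag b]) i j)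
    & forall i, #|bag i| <= w.+1].

Definition torso (e : rel T) (W X : {set T}) : rel T :=
  fun x1 x2 =>
    (x1 != x2) &&
    (e x1 x2 ||
     [exists z1 in W :\: X, exists z2 in W :\: X,
        [&& connect (restr e (W :\: X)) z1 z2, e x1 z1 & e x2 z2]]).

End Graphs.

Definition relation (D : finType) := {r : nat & {set r.-tuple D}}.

Definition language (D : finType) := seq (relation D).

(* A CSP instance over variables V and domain D: a finite set of
   constraints, indexed by a finType C of constraint names; constraint c
   is (scope c, crel c).  Distinct names denote distinct constraints. *)
Record instance (V D : finType) := Instance {
  cons_t :> finType;
  arity : cons_t -> nat;
  scope : forall c : cons_t, (arity c).-tuple V;
  crel : forall c : cons_t, {set (arity c).-tuple D};
  cons_inj : injective (fun c : cons_t =>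
     existT (fun r => (r.-tuple V * {set r.-tuple D})%type) (arity c)
            (scope c, crel c))
}.

Section CSP.
Variables (V D : finType) (I : instance V D).

(* vertices of the incidence graph: variables (inl) and constraints (inr) *)
Local Notation vtx := (V + cons_t I)%type.

Definition vars : {set V} := [set x | [exists c : I, x \in scope c]].

Definition inc_vertices : {set vtx} :=
  [set u : vtx | match u with inl x => x \in vars | inr _ => true end].

Definition inc_edge : rel vtx := fun u v =>
  match u, v with
  | inl x, inr c => x \in scope c
  | inr c, inl x => x \in scope c
  | _, _ => false
  end.

Definition var_vertices : {set vtx} := [set inl x | x in vars].

Definition separation (q k : nat) (A S B : {set vtx}) : Prop :=
  [/\ A :|: S :|: B = inc_vertices,
      [&& [disjoint A & S], [disjoint A & B] & [disjoint S & B]],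
      S \subset var_vertices,
      (nbh inc_edge inc_vertices A \subset S) &&
      (nbh inc_edge inc_vertices B \subset S) /\
      #|S| <= k
    & q <= #|A| /\ q <= #|B|].

Definition has_separation (q k : nat) : Prop :=
  exists A S B, separation q k A S B.

(* The constraint of I|_alpha obtained from constraint c, for an
   assignment alpha : X -> D: positions of variables of X are removed and the relation
   is restricted to tuples consistent with alpha. *)
Local Unset Implicit Arguments.
Definition kept (X : {set V}) (c : I) : seq 'I_(arity c) :=
  [seq i <- enum 'I_(arity c) | tnth (scope c) i \notin X].

Definition consistent (X : {set V}) (alpha : {x : V | x \in X} -> D) (c : I)
  (t : (arity c).-tuple D) : bool :=
  [forall i : 'I_(arity c), forall y : {x : V | x \in X},
     (val y == tnth (scope c) i) ==> (tnth t i == alpha y)].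

Definition restr_rel (X : {set V}) (alpha : {x : V | x \in X} -> D) (c : I)
  : {set (size (kept X c)).-tuple D} :=
  [set u : (size (kept X c)).-tuple D |
     [exists t in crel c, consistent X alpha c t &&
        (val u == [seq tnth t i | i <- kept X c])]].

Definition restr_relation (X : {set V}) (alpha : {x : V | x \in X} -> D) (c : I)
  : relation D :=
  existT (fun r => {set r.-tuple D}) (size (kept X c)) (restr_rel X alpha c).

Definition uses_only (Gamma : language D) (X : {set V}) (alpha : {x : V | x \in X} -> D) :=
  forall c : I, restr_relation X alpha c \in Gamma.

Definition strong_backdoor (Gamma : language D) (X : {set V}) : Prop :=
  X \subset vars /\ forall alpha : {x : V | x \in X} -> D, uses_only Gamma X alpha.

Definition width_le (X : {set V}) (k : nat) : Prop :=
  let Xv := [set inl x | x in X] : {set vtx} in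
  tw_le (torso inc_edge inc_vertices Xv) Xv k.

Definition nice (Gamma : language D) (beta k : nat) : Prop :=
  tw_le inc_edge inc_vertices (beta + k) \/
  ((exists X, strong_backdoor Gamma X /\ width_le X k) ->
   exists X, [/\ strong_backdoor Gamma X, width_le X k &
     let Xv := [set inl x | x in X] : {set vtx} in
     exists C, [/\ is_component inc_edge (inc_vertices :\: Xv) C,
                   beta < #|C|,
                   (forall C', is_component inc_edge (inc_vertices :\: Xv) C' ->
                       beta < #|C'| -> C' = C)
                 & #|inc_vertices :\: cnbh inc_edge inc_vertices C| <= beta]]).

End CSP.

(* If tw(G) <= q + k we are done, so let X be a backdoor of width <= k.
   The neighbourhood N(C) of a component C of G - X is a clique of the torso,
   hence lies in one bag of a torso decomposition and has at most k + 1
   elements.  Hanging a bag C :|: N(C) below that bag for every C yields a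
   decomposition of G of width <= q + k as soon as all components have at
   most q vertices; so some component C has more than q vertices.  Then
   (C, N(C), V(G) :\: N[C]) is a (q, k + 1)-separation unless
   |V(G) :\: N[C]| <= q, and this bound also rules out a second large
   component, which would lie in V(G) :\: N[C]. *)

From mathcomp Require Import all_boot.
From Stdlib Require Import Classical.

Set Implicit Arguments.
Unset Strict Implicit.
Unset Printing Implicit Defensive.

Lemma connect_homo (T T' : finType) (e : rel T) (e' : rel T') (h : T -> T') :
  (forall x y, e x y -> e' (h x) (h y)) ->
  forall x y, connect e x y -> connect e' (h x) (h y).
Proof.
move=> he x y /connectP [p + ->]; elim: p x => [|z p IHp] x //= /andP [exz pz].
exact: connect_trans (connect1 (he _ _ exz)) (IHp _ pz).
Qed.

Lemma tedge_sym n (par : 'I_n.+1 -> 'I_n.+1) : symmetric (tedge par).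
Proof. by move=> a b; rewrite /tedge orbC. Qed.

Definition subtree_edge (T : finType) n (par : 'I_n.+1 -> 'I_n.+1)
    (bag : 'I_n.+1 -> {set T}) (v : T) : rel 'I_n.+1 :=
  fun a b => [&& tedge par a b, v \in bag a & v \in bag b].

Lemma subtree_edge_sym (T : finType) n par (bag : 'I_n.+1 -> {set T}) v :
  connect_sym (subtree_edge par bag v).
Proof.
apply: sym_connect_sym => a b; rewrite /subtree_edge tedge_sym.
by case: (v \in bag a); rewrite ?andbF ?andbT.
Qed.

Section TreeDecomposition.
Variables (T : finType) (e : rel T) (W : {set T}).
Variables (n : nat) (par : 'I_n.+1 -> 'I_n.+1) (bag : 'I_n.+1 -> {set T}).
Hypothesis par_lt : forall i : 'I_n.+1, 0 < i -> par i < i.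
Hypothesis bag_cover : forall v, v \in W -> exists i, v \in bag i.
Hypothesis bag_edge : forall u v, u \in W -> v \in W -> e u v ->
  exists i, (u \in bag i) && (v \in bag i).
Hypothesis bag_connect : forall v i j, v \in bag i -> v \in bag j ->
  connect (subtree_edge par bag v) i j.

(* [par 0] is junk: [up] fixes the root 0 instead. *)
Definition up (i : 'I_n.+1) : 'I_n.+1 := if 0 < i then par i else i.

Definition ancestor (t i : 'I_n.+1) : Prop := exists m, iter m up i = t.

Lemma up_leq i : up i <= i.
Proof. by rewrite /up; case: ifP => // /par_lt /ltnW. Qed.

Lemma ancestor_leq t i : ancestor t i -> t <= i.
Proof.
case=> m <-; elim: m => //= m IHm; exact: leq_trans (up_leq _) IHm.
Qed.

Lemma ancestor_tedge t a b : tedge par a b -> ancestor t a ->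
  ancestor t b \/ [/\ a = t, 0 < a & par a = b].
Proof.
case/orP => [/andP [a_gt0 /eqP par_a] | /andP [b_gt0 /eqP par_b]] [m tm].
- case: m tm => [|m] tm; first by right.
  by left; exists m; rewrite -tm iterSr /up a_gt0 par_a.
- by left; exists m.+1; rewrite -tm iterSr /up b_gt0 par_b.
Qed.

Lemma connect_ancestor (r : rel 'I_n.+1) (t i j : 'I_n.+1) :
  subrel r (tedge par) -> (0 < t -> ~~ r t (par t)) ->
  connect r i j -> ancestor t i -> ancestor t j.
Proof.
move=> r_tedge no_exit /connectP [p + ->]; elim: p i => [|z p IHp] i //=.
case/andP => riz pz ti; apply: IHp pz _.
have [//|[it i_gt0 par_i]] := ancestor_tedge (r_tedge _ _ riz) ti.
by subst i z; rewrite (negbTE (no_exit i_gt0)) in riz.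
Qed.

Definition is_top (v : T) (t : 'I_n.+1) : bool :=
  (v \in bag t) && [forall i, (v \in bag i) ==> (t <= i)].

Lemma exists_top v : v \in W -> exists t, is_top v t.
Proof.
move=> /bag_cover [i vi].
case: (@arg_minnP _ i (fun j => v \in bag j) val vi) => t vt t_min.
by exists t; rewrite /is_top vt; apply/forallP => j; apply/implyP/t_min.
Qed.

Lemma top_ancestor v t j : is_top v t -> v \in bag j -> ancestor t j.
Proof.
case/andP => vt /forallP t_min vj.
apply: (connect_ancestor _ _ (bag_connect vt vj)); last by exists 0.
  by move=> a b /and3P [].
move=> t_gt0; apply/negP => /and3P [_ _ v_par].
by move: (implyP (t_min _) v_par); rewrite leqNgt par_lt.
Qed.

(* Take the clique vertex whose top node is deepest: every other clique
   vertex shares a bag below that node, so its subtree must reach it. *)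
Lemma clique_sub_bag (K : {set T}) : K \subset W ->
  {in K &, forall u v, u != v -> e u v} -> exists i, K \subset bag i.
Proof.
move=> KW K_clique.
have [->|[v0 v0K]] := set_0Vmem K; first by exists ord0; rewrite sub0set.
have [t0 top_t0] := exists_top (subsetP KW _ v0K).
pose P := [pred p : T * 'I_n.+1 | (p.1 \in K) && is_top p.1 p.2].
have P0 : P (v0, t0) by rewrite /= v0K.
case: (@arg_maxnP _ _ P (fun p => val p.2) P0) => [[v t]] /= /andP [vK top_t].
move=> t_max; exists t; apply/subsetP => u uK.
have [-> | uv] := eqVneq u v; first by case/andP: top_t.
have [j /andP [uj vj]] :=
  bag_edge (subsetP KW _ uK) (subsetP KW _ vK) (K_clique _ _ uK vK uv).
have [tu top_tu] := exists_top (subsetP KW _ uK).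
have tu_le_t : tu <= t by apply: (t_max (u, tu)); rewrite /= uK.
apply/negPn/negP => u_t.
have t_tu : ancestor t tu.
  apply: (connect_ancestor _ _ (bag_connect uj (proj1 (andP top_tu)))).
  - by move=> a b /and3P [].
  - by move=> _; rewrite /subtree_edge (negbTE u_t) andbF.
  exact: top_ancestor top_t vj.
have tu_t : tu = t by apply/val_inj/eqP; rewrite eqn_leq tu_le_t ancestor_leq.
by case/andP: top_tu; rewrite tu_t (negbTE u_t).
Qed.

End TreeDecomposition.

Section GlueLeaves.
Variables (T J : finType) (n : nat).
Variables (par : 'I_n.+1 -> 'I_n.+1) (bag : 'I_n.+1 -> {set T}).
Variables (att : J -> 'I_n.+1) (leaf : J -> {set T}).

Local Notation N := #|J|.

(* A new leaf for each [j : J], with bag [leaf j] and parent [att j]; the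
   leaves are numbered after the old nodes, so parents keep smaller indices. *)
Definition glue_par (i : 'I_(n.+1 + N)) : 'I_(n.+1 + N) :=
  lshift N (match split i with inl o => par o | inr r => att (enum_val r) end).

Definition glue_bag (i : 'I_(n.+1 + N)) : {set T} :=
  match split i with inl o => bag o | inr r => leaf (enum_val r) end.

Lemma glue_par_lt : (forall i : 'I_n.+1, 0 < i -> par i < i) ->
  forall i : 'I_(n.+1 + N), 0 < i -> glue_par i < i.
Proof.
move=> par_lt i; rewrite /glue_par; case: split_ordP => [o|r] -> /=.
  exact: par_lt.
by move=> _; rewrite (leq_trans (ltn_ord _)) ?leq_addr.
Qed.

Lemma glue_bag_old o : glue_bag (lshift N o) = bag o.
Proof. by rewrite /glue_bag (unsplitK (inl o)). Qed.

Lemma glue_bag_leaf j : glue_bag (rshift n.+1 (enum_rank j)) = leaf j.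
Proof. by rewrite /glue_bag (unsplitK (inr _)) enum_rankK. Qed.

Lemma glue_tedge_old a b : tedge par a b -> tedge glue_par (lshift N a) (lshift N b).
Proof.
rewrite /tedge /glue_par !(unsplitK (inl _)).
by case/orP => /andP [-> /eqP ->]; rewrite eqxx ?orbT.
Qed.

Lemma glue_tedge_leaf j :
  tedge glue_par (rshift n.+1 (enum_rank j)) (lshift N (att j)).
Proof. by rewrite /tedge /glue_par (unsplitK (inr _)) enum_rankK eqxx. Qed.

Variable X : {set T}.
Hypothesis bag_sub : forall o, bag o \subset X.
Hypothesis bag_connect : forall v i j, v \in bag i -> v \in bag j ->
  connect (subtree_edge par bag v) i j.
Hypothesis leaf_att : forall j, leaf j :&: X \subset bag (att j).
Hypothesis leaf_disjoint : forall j j' v,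
  v \in leaf j -> v \in leaf j' -> v \notin X -> j = j'.

Local Notation glue_edge := (subtree_edge glue_par glue_bag).

Lemma glue_connect_old v o o' : v \in bag o -> v \in bag o' ->
  connect (glue_edge v) (lshift N o) (lshift N o').
Proof.
move=> vo vo'; apply: connect_homo (bag_connect vo vo') => a b /and3P [ab va vb].
by rewrite /subtree_edge !glue_bag_old glue_tedge_old ?va.
Qed.

Lemma glue_reach_old v i : v \in X -> v \in glue_bag i ->
  exists2 o, v \in bag o & connect (glue_edge v) i (lshift N o).
Proof.
move=> vX; case: (split_ordP i) => [o|r] ->.
  by rewrite glue_bag_old => vo; exists o.
rewrite -[r]enum_valK glue_bag_leaf => vl.
have v_att : v \in bag (att (enum_val r)) by apply/(subsetP (leaf_att _))/setIP.
exists (att (enum_val r)) => //; apply: connect1.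
by rewrite /subtree_edge glue_tedge_leaf glue_bag_leaf glue_bag_old vl v_att.
Qed.

Lemma glue_connect v i j : v \in glue_bag i -> v \in glue_bag j ->
  connect (glue_edge v) i j.
Proof.
have [vX vi vj | vX] := boolP (v \in X).
  have [o vo io] := glue_reach_old vX vi.
  have [o' vo' jo'] := glue_reach_old vX vj.
  apply: connect_trans io (connect_trans (glue_connect_old vo vo') _).
  by rewrite subtree_edge_sym.
have leafP i' : v \in glue_bag i' ->
    exists2 j', i' = rshift n.+1 (enum_rank j') & v \in leaf j'.
  case: (split_ordP i') => [o|r] ->.
    by rewrite glue_bag_old => /(subsetP (bag_sub o)); rewrite (negbTE vX).
  by rewrite -[r]enum_valK glue_bag_leaf => vl; exists (enum_val r).
move=> /leafP [j1 -> v1] /leafP [j2 -> v2].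
by rewrite (leaf_disjoint v1 v2 vX).
Qed.

End GlueLeaves.

Definition component (T : finType) (e : rel T) (U : {set T}) (y : T) : {set T} :=
  [set z in U | connect (restr e U) y z].

Section Neighbourhood.
Variables (T : finType) (e : rel T) (W A : {set T}).

Lemma cnbh_edge u v : u \in A -> v \in W -> e u v -> v \in cnbh e W A.
Proof.
move=> uA vW euv; rewrite /cnbh /nbh !inE vW andbT.
by case: (v \in A) => //=; apply/existsP; exists u; rewrite uA.
Qed.

Hypothesis AW : A \subset W.

Lemma cnbh_partition : A :|: nbh e W A :|: (W :\: cnbh e W A) = W.
Proof.
apply/setP => v; rewrite /cnbh /nbh !inE.
have [vA | _] := boolP (v \in A); first by rewrite (subsetP AW).
by case: (v \in W); rewrite /= ?andbT ?orbN.
Qed.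

Lemma cnbh_sub : cnbh e W A \subset W.
Proof. by rewrite subUset AW; apply/subsetP => v /setIdP [/setDP []]. Qed.

Lemma nbh_disjoint : [disjoint A & nbh e W A].
Proof. by rewrite disjoints_subset; apply/subsetP => v; rewrite !inE => ->. Qed.

Lemma disjoint_compl_cnbh (B : {set T}) : B \subset cnbh e W A ->
  [disjoint B & W :\: cnbh e W A].
Proof.
move=> B_sub; rewrite disjoints_subset (subset_trans B_sub) //.
by apply/subsetP => v v_cnbh; rewrite inE in_setD v_cnbh.
Qed.

Lemma nbh_compl_cnbh : symmetric e ->
  nbh e W (W :\: cnbh e W A) \subset nbh e W A.
Proof.
move=> esym; apply/subsetP => v /setIdP [/setDP [vW vB] /existsP [u /andP [uB euv]]].
have: v \in cnbh e W A by move: vB; rewrite !inE vW andbT negbK.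
case/setUP => // vA; case/setDP: uB => uW /negP []; rewrite esym in euv.
exact: cnbh_edge vA uW euv.
Qed.

End Neighbourhood.

Section Components.
Variables (T : finType) (e : rel T) (W X : {set T}).
Hypothesis esym : symmetric e.

Local Notation U := (W :\: X).
Local Notation comp := (component e (W :\: X)).

Lemma component_sub y : comp y \subset U.
Proof. by apply/subsetP => z /setIdP []. Qed.

Lemma mem_component y : y \in U -> y \in comp y.
Proof. by move=> yU; rewrite inE yU connect0. Qed.

Lemma restr_sym : symmetric (restr e U).
Proof. by move=> x y; rewrite /restr andbCA esym. Qed.

Lemma component_eq y y' z : z \in comp y -> z \in comp y' -> comp y = comp y'.
Proof.
have rsym := sym_connect_sym restr_sym.
move=> /setIdP [_ yz] /setIdP [_ y'z].
have yy' : connect (restr e U) y y' by rewrite (connect_trans yz) // rsym.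
by apply/setP => w; rewrite !inE (same_connect rsym yy').
Qed.

Lemma nbh_component_sub y : nbh e W (comp y) \subset X.
Proof.
apply/subsetP => z /setIdP [/setDP [zW z_comp] /existsP [x /andP [xC exz]]].
apply/negPn/negP => zX; case/negP: z_comp.
have zU : z \in U by rewrite inE zX.
case/setIdP: xC => xU yx; rewrite inE zU (connect_trans yx) // connect1 //.
by rewrite /restr xU zU.
Qed.

Lemma nbh_component_torso y : {in nbh e W (comp y) &, forall x1 x2,
  x1 != x2 -> torso e W X x1 x2}.
Proof.
move=> x1 x2 /setIdP [_ /existsP [z1 /andP [z1C e1]]].
move=> /setIdP [_ /existsP [z2 /andP [z2C e2]]] x12.
rewrite /torso x12 /=; apply/orP; right.
case/setIdP: z1C => z1U yz1; case/setIdP: z2C => z2U yz2.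
apply/existsP; exists z1; rewrite z1U; apply/existsP; exists z2; rewrite z2U.
rewrite esym e1 esym e2 andbT (connect_trans _ yz2) //.
by rewrite (sym_connect_sym restr_sym).
Qed.

Lemma mem_cnbh_component y v : v \in cnbh e W (comp y) -> v \notin X ->
  v \in comp y.
Proof.
by case/setUP => // /(subsetP (nbh_component_sub y)) vX /negP.
Qed.

Lemma component_sub_compl_cnbh y y' : comp y' != comp y ->
  comp y' \subset W :\: cnbh e W (comp y).
Proof.
move=> neq; apply/subsetP => z z_y'.
have /setDP [zW zX] := subsetP (component_sub y') z z_y'.
rewrite inE zW andbT; apply/setUP => -[z_y | /(subsetP (nbh_component_sub y))].
  by case/eqP: neq; apply: component_eq z_y' z_y.
by rewrite (negbTE zX).
Qed.

Section BoundedWidth.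
Variable k : nat.
Hypothesis torso_tw : tw_le (torso e W X) X k.

Lemma card_nbh_component y : #|nbh e W (comp y)| <= k.+1.
Proof.
case: torso_tw => n [par [bag [par_lt [_ bag_cover] bag_edge bag_connect bag_card]]].
have [i sub_i] := clique_sub_bag par_lt bag_cover bag_edge bag_connect
  (nbh_component_sub y) (nbh_component_torso (y := y)).
exact: leq_trans (subset_leq_card sub_i) (bag_card i).
Qed.

Hypotheses (eirr : irreflexive e) (XW : X \subset W).

(* Below a bag containing the torso clique [N(C)], hang a new bag
   [C :|: N(C)] for every component [C] of [G - X]. *)
Section GlueComponents.
Variables (n : nat) (par : 'I_n.+1 -> 'I_n.+1) (bag : 'I_n.+1 -> {set T}).
Hypothesis par_lt : forall i : 'I_n.+1, 0 < i -> par i < i.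
Hypothesis bag_sub : forall i, bag i \subset X.
Hypothesis bag_cover : forall v, v \in X -> exists i, v \in bag i.
Hypothesis bag_edge : forall u v, u \in X -> v \in X -> torso e W X u v ->
  exists i, (u \in bag i) && (v \in bag i).
Hypothesis bag_connect : forall v i j, v \in bag i -> v \in bag j ->
  connect (subtree_edge par bag v) i j.

Definition comp_index : finType := {C : {set T} | C \in [set comp y | y in U]}.

Lemma comp_indexP (C : comp_index) : exists2 y, y \in U & val C = comp y.
Proof. exact/imsetP/valP. Qed.

Lemma exists_bag_nbh (C : comp_index) : exists i, nbh e W (val C) \subset bag i.
Proof.
have [y _ ->] := comp_indexP C.
have [i sub_i] := clique_sub_bag par_lt bag_cover bag_edge bag_connect
  (nbh_component_sub y) (nbh_component_torso (y := y)).
by exists i.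
Qed.

Definition comp_att (C : comp_index) : 'I_n.+1 := xchoose (exists_bag_nbh C).

Definition comp_leaf (C : comp_index) : {set T} := cnbh e W (val C).

Local Notation gbag := (glue_bag bag comp_leaf).

Lemma glue_bag_component y : y \in U -> exists i, gbag i = cnbh e W (comp y).
Proof.
move=> yU; pose C : comp_index := Sub (comp y) (imset_f comp yU).
by exists (rshift n.+1 (enum_rank C)); rewrite glue_bag_leaf.
Qed.

Lemma glue_bag_sub i : gbag i \subset W.
Proof.
case: (split_ordP i) => [o|C] ->.
  by rewrite glue_bag_old (subset_trans (bag_sub o)).
rewrite -[C]enum_valK glue_bag_leaf /comp_leaf.
have [y _ ->] := comp_indexP (enum_val C).
exact/cnbh_sub/(subset_trans (component_sub y))/subsetDl.
Qed.

Lemma glue_bag_cover v : v \in W -> exists i, v \in gbag i.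
Proof.
move=> vW; have [vX | vX] := boolP (v \in X).
  by have [o vo] := bag_cover vX; exists (lshift _ o); rewrite glue_bag_old.
have [|i leaf_i] := @glue_bag_component v; first by rewrite inE vX.
by exists i; rewrite leaf_i in_setU mem_component // inE vX.
Qed.

Lemma glue_bag_component_edge u v : u \in U -> v \in W -> e u v ->
  exists i, (u \in gbag i) && (v \in gbag i).
Proof.
move=> uU vW euv; have [i leaf_i] := glue_bag_component uU; exists i.
by rewrite leaf_i (cnbh_edge (mem_component uU) vW euv) in_setU mem_component.
Qed.

Lemma glue_bag_edge u v : u \in W -> v \in W -> e u v ->
  exists i, (u \in gbag i) && (v \in gbag i).
Proof.
move=> uW vW euv.
have [uX | uX] := boolP (u \in X); last first.
  by apply: glue_bag_component_edge; rewrite ?inE ?uX.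
have [vX | vX] := boolP (v \in X); last first.
  have vU : v \in U by rewrite inE vX.
  have evu : e v u by rewrite esym.
  have [i /andP [vi ui]] := glue_bag_component_edge vU uW evu.
  by exists i; rewrite ui vi.
have torso_uv : torso e W X u v.
  by rewrite /torso euv andbT; apply: contraTneq euv => ->; rewrite eirr.
have [o /andP [uo vo]] := bag_edge uX vX torso_uv.
by exists (lshift _ o); rewrite glue_bag_old uo.
Qed.

Lemma glue_bag_connect v i j : v \in gbag i -> v \in gbag j ->
  connect (subtree_edge (glue_par par comp_att) gbag v) i j.
Proof.
apply: (glue_connect (X := X)) => // [C | C C' w].
  apply/subsetP => w /setIP [/setUP [wC | w_nbh] wX].
    have [y _ C_y] := comp_indexP C.
    by move: wC; rewrite C_y => /(subsetP (component_sub y)); rewrite inE wX.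
  exact: subsetP (xchooseP (exists_bag_nbh C)) _ w_nbh.
have [y _ C_y] := comp_indexP C; have [y' _ C'_y'] := comp_indexP C'.
rewrite /comp_leaf C_y C'_y' => wC wC' wX; apply: val_inj; rewrite C_y C'_y'.
exact: component_eq (mem_cnbh_component wC wX) (mem_cnbh_component wC' wX).
Qed.

End GlueComponents.

Lemma tw_le_glue_components q : (forall y, y \in U -> #|comp y| <= q) ->
  tw_le e W (q + k).
Proof.
move=> small.
case: torso_tw => n [par [bag [par_lt [bag_sub bag_cover] bag_edge bag_connect]]].
move=> bag_card; pose att := comp_att par_lt bag_cover bag_edge bag_connect.
exists (n + #|comp_index|), (glue_par par att), (glue_bag bag comp_leaf); split.
- exact: glue_par_lt.
- by split; [exact: glue_bag_sub | exact: glue_bag_cover].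
- exact: glue_bag_edge.
- exact: glue_bag_connect.
- move=> i; case: (@split_ordP n.+1 _ i) => [o|C] ->.
    by rewrite glue_bag_old (leq_trans (bag_card o)) // ltnS leq_addl.
  rewrite -[C]enum_valK glue_bag_leaf /comp_leaf.
  have [y yU ->] := comp_indexP (enum_val C).
  rewrite -addnS (leq_trans (leq_card_setU _ _).1) // leq_add ?small //.
  exact: card_nbh_component.
Qed.

End BoundedWidth.
End Components.

Section Incidence.
Variables (V D : finType) (I : instance V D).

Local Notation E := (@inc_edge V D I).
Local Notation W := (inc_vertices I).

Lemma inc_edge_sym : symmetric E.
Proof. by move=> [x|c] [y|d]. Qed.

Lemma inc_edge_irr : irreflexive E.
Proof. by case. Qed.

Variable X : {set V}.
Hypothesis X_vars : X \subset vars I.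
Local Notation Xv := ([set inl x | x in X] : {set V + I}).

Lemma var_set_sub : Xv \subset W.
Proof. by apply/subsetP => _ /imsetP [x xX ->]; rewrite inE (subsetP X_vars). Qed.

Lemma component_separation q k y : width_le V D I X k -> y \in W :\: Xv ->
  q < #|component E (W :\: Xv) y| ->
  q <= #|W :\: cnbh E W (component E (W :\: Xv) y)| ->
  has_separation I q k.+1.
Proof.
set C := component E _ y => tw yU big_C big_rest.
have torso_tw : tw_le (torso E W Xv) Xv k := tw.
have CW : C \subset W := subset_trans (component_sub _ _ _ _) (subsetDl _ _).
exists C, (nbh E W C), (W :\: cnbh E W C); split.
- exact: cnbh_partition.
- by rewrite nbh_disjoint !disjoint_compl_cnbh ?subsetUl ?subsetUr.
- apply: subset_trans (nbh_component_sub _ _ _ y) _; exact: imsetS.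
- rewrite subxx nbh_compl_cnbh //=; last exact: inc_edge_sym.
  by split=> //; move: (card_nbh_component inc_edge_sym torso_tw y).
- by split; [exact: ltnW|].
Qed.

Section UniqueLargeComponent.
Variables (q k : nat).
Hypothesis no_sep : ~ has_separation I q k.+1.
Hypothesis tw_big : ~ tw_le E W (q + k).
Hypothesis X_width : width_le V D I X k.

Local Notation U := (W :\: Xv).
Local Notation comp := (component E U).

Lemma exists_large_component : exists2 y, y \in U & q < #|comp y|.
Proof.
have [/existsP [y /andP [yU big_C]] | /existsPn small] :=
  boolP [exists y in U, q < #|comp y|]; first by exists y.
have torso_tw : tw_le (torso E W Xv) Xv k := X_width.
case: tw_big.
apply: (tw_le_glue_components inc_edge_sym torso_tw inc_edge_irr var_set_sub).
by move=> y yU; move: (small y); rewrite yU ltnNge negbK.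
Qed.

Variable y : V + I.
Hypotheses (yU : y \in U) (big_C : q < #|comp y|).

Lemma card_compl_cnbh_large_component : #|W :\: cnbh E W (comp y)| <= q.
Proof.
rewrite leqNgt; apply/negP => /ltnW big_rest; apply: no_sep.
exact: component_separation X_width yU big_C big_rest.
Qed.

Lemma large_component_unique y' : q < #|comp y'| -> comp y' = comp y.
Proof.
move=> big_C'; apply/eqP/negPn/negP => neq.
have := subset_leq_card (component_sub_compl_cnbh inc_edge_sym neq).
by rewrite leqNgt (leq_ltn_trans card_compl_cnbh_large_component big_C').
Qed.

End UniqueLargeComponent.

End Incidence.

Theorem lemma11 (V D : finType) (Gamma : language D) (I : instance V D)
  (q k : nat) :
  ~ has_separation I q k.+1 -> nice V D I Gamma q k.
Proof.
move=> no_sep.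
have [tw_small | tw_big] := classic (tw_le (@inc_edge V D I) (inc_vertices I) (q + k)).
  by left.
right; case=> X [bdX X_width]; exists X; split=> //=.
have [y yU big_C] := exists_large_component bdX.1 tw_big X_width.
exists (component (@inc_edge V D I) (inc_vertices I :\: [set inl x | x in X]) y).
split=> //; first by exists y.
  move=> _ [y' _ ->] big_C'.
  exact (large_component_unique bdX.1 no_sep X_width yU big_C big_C').
exact (card_compl_cnbh_large_component bdX.1 no_sep X_width yU big_C).
Qed.
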